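(* Let $G$ be a connected graph and let $v,w$ be vertices of $G$. Suppose there is a constant $c$ such that $|B_w(n+1)| < c\cdot |B_w(n)|$ for all $n\in\mathbb{N}$. If $G$ has 2-distinguishing density zero at $v$, then $G$ has 2-distinguishing density zero.
   Context: All graphs are simple (no loops or multiple edges) with vertex set $V$; $d$ is the graph distance. $B_x(r)=\{y\in V: d(x,y)\le r\}$ and $S_x(r)=\{y\in V: d(x,y)=r\}$. A 2-coloring $l:V\to\{\text{blue},\text{red}\}$ is preserved by an automorphism $g$ if $l(g(x))=l(x)$ for all $x\in V$; it is 2-distinguishing if the only automorphism of $G$ preserving it is the identity. Its color classes are $V_{\text{blue}}$ and $V_{\text{red}}$. For $W\subseteq V$ and $x\in V$, the density of $W$ at $x$ is $\delta_x(W):=\lim_{n\to\infty}\frac{|B_x(n)\cap W|}{|B_x(n)|}$ if the limit exists (with the conventions that a finite cardinal divided by an infinite cardinal is $0$ and a quotient of two infinite cardinals is undefined). If $\delta_x(W)$ exists for all $x\in V$, set $\delta(W):=\sup_{x\in V}\delta_x(W)$. For a 2-coloring $l$, $\delta_x(l):=\min\{\delta_x(V_{\text{blue}}),\delta_x(V_{\text{red}})\}$ and $\delta(l):=\min\{\delta(V_{\text{blue}}),\delta(V_{\text{red}})\}$. $G$ has 2-distinguishing density zero at $x$ if there is a 2-distinguishing coloring $l$ with $\delta_x(l)=0$; $G$ has 2-distinguishing density zero if there is a 2-distinguishing coloring $l$ with $\delta(l)=0$. *)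

From Stdlib Require Import Reals List.
Import ListNotations.
Open Scope R_scope.

Section Graphs.
Context {V : Type}.

Definition simple_graph (adj : V -> V -> Prop) : Prop :=
  (forall x y, adj x y -> adj y x) /\ (forall x, ~ adj x x).

Inductive walk (adj : V -> V -> Prop) : V -> V -> nat -> Prop :=
| walk_nil : forall x, walk adj x x 0
| walk_cons : forall x y z n, adj x y -> walk adj y z n -> walk adj x z (S n).

Definition connected (adj : V -> V -> Prop) : Prop :=
  forall x y, exists n, walk adj x y n.

Definition ball (adj : V -> V -> Prop) (x : V) (r : nat) (y : V) : Prop :=
  exists m, (m <= r)%nat /\ walk adj x y m.

Definition card_is (P : V -> Prop) (k : nat) : Prop :=
  exists l : list V, NoDup l /\ length l = k /\ forall y, In y l <-> P y.

Definition finite_set (P : V -> Prop) : Prop := exists k, card_is P k.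

(* The n-th term |B_x(n) ∩ W| / |B_x(n)|, with conventions:
   finite/finite = usual quotient, finite/infinite = 0,
   infinite/infinite = undefined (no r satisfies the relation). *)
Definition ratio_at (adj : V -> V -> Prop) (x : V) (W : V -> Prop) (n : nat) (r : R) : Prop :=
  (exists a b, card_is (fun y => ball adj x n y /\ W y) a /\
               card_is (ball adj x n) b /\ r = INR a / INR b)
  \/ (finite_set (fun y => ball adj x n y /\ W y) /\ ~ finite_set (ball adj x n) /\ r = 0).

Definition density_at (adj : V -> V -> Prop) (x : V) (W : V -> Prop) (d : R) : Prop :=
  exists u : nat -> R, (forall n, ratio_at adj x W n (u n)) /\ Un_cv u d.

Definition density (adj : V -> V -> Prop) (W : V -> Prop) (s : R) : Prop :=
  (forall x, exists d, density_at adj x W d) /\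
  is_lub (fun r => exists x, density_at adj x W r) s.

Definition automorphism (adj : V -> V -> Prop) (g : V -> V) : Prop :=
  (forall x y, g x = g y -> x = y) /\ (forall y, exists x, g x = y) /\
  (forall x y, adj x y <-> adj (g x) (g y)).

Definition preserves (l : V -> bool) (g : V -> V) : Prop :=
  forall x, l (g x) = l x.

Definition distinguishing2 (adj : V -> V -> Prop) (l : V -> bool) : Prop :=
  forall g, automorphism adj g -> preserves l g -> forall x, g x = x.

Definition V_blue (l : V -> bool) (x : V) : Prop := l x = true.
Definition V_red (l : V -> bool) (x : V) : Prop := l x = false.

Definition dist_density_zero_at (adj : V -> V -> Prop) (x : V) : Prop :=
  exists l, distinguishing2 adj l /\
    exists db dr, density_at adj x (V_blue l) db /\
                  density_at adj x (V_red l) dr /\ Rmin db dr = 0.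

Definition dist_density_zero (adj : V -> V -> Prop) : Prop :=
  exists l, distinguishing2 adj l /\
    exists sb sr, density adj (V_blue l) sb /\
                  density adj (V_red l) sr /\ Rmin sb sr = 0.

End Graphs.

From Stdlib Require Import Reals Lra Lia List ClassicalEpsilon FunctionalExtensionality.
Open Scope R_scope.

(* Bounded growth of the balls around [w] makes the sizes of balls around any
   two vertices comparable up to a constant factor, after a bounded shift of
   the radius.  Hence the proportion of a colour in [B_x(n)] is at most a
   constant times its proportion in [B_v(n + d(v,x))], so a colour class of
   density zero at [v] has density zero at every vertex, and the other class
   density one everywhere. *)

Lemma Rdiv_le_scaled (A A' B B' C K : R) :
  0 <= A -> A <= A' -> 0 < C -> C <= B -> 0 < B' -> B' <= K * C ->
  A / B <= K * (A' / B').
Proof.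
  intros HA HAA' HC HCB HB' HB'K.
  apply Rle_trans with (A' / C).
  - unfold Rdiv. apply Rle_trans with (A' * / B).
    + apply Rmult_le_compat_r; [left; apply Rinv_0_lt_compat|]; lra.
    + apply Rmult_le_compat_l; [lra|]. apply Rinv_le_contravar; lra.
  - assert (HK : B' / C <= K).
    { apply Rmult_le_reg_r with C; [lra|]. unfold Rdiv.
      rewrite Rmult_assoc, Rinv_l; lra. }
    replace (A' / C) with (A' / B' * (B' / C)) by (field; lra).
    rewrite (Rmult_comm K). apply Rmult_le_compat_l; [|lra].
    unfold Rdiv; apply Rmult_le_pos; [|left; apply Rinv_0_lt_compat]; lra.
Qed.

Lemma Un_cv_0_le_scaled (u v : nat -> R) (K : R) (p : nat) :
  0 < K -> (forall n, 0 <= u n) -> (forall n, (p <= n)%nat -> u n <= K * v n) ->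
  Un_cv v 0 -> Un_cv u 0.
Proof.
  intros HK Hu Huv Hv eps Heps.
  destruct (Hv (eps / K)) as [N HN]; [apply Rdiv_lt_0_compat; lra|].
  exists (Nat.max N p). intros n Hn.
  specialize (HN n ltac:(lia)). specialize (Huv n ltac:(lia)).
  unfold R_dist in *. rewrite Rminus_0_r in *.
  rewrite Rabs_right by (apply Rle_ge, Hu).
  apply Rle_lt_trans with (K * v n); [exact Huv|].
  apply Rle_lt_trans with (K * Rabs (v n)); [apply Rmult_le_compat_l; [lra|apply Rle_abs]|].
  replace eps with (K * (eps / K)) by (field; lra).
  apply Rmult_lt_compat_l; assumption.
Qed.

Lemma Un_cv_one_minus (u : nat -> R) (l : R) :
  Un_cv u l -> Un_cv (fun n => 1 - u n) (1 - l).
Proof.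
  apply CV_minus. intros eps Heps. exists 0%nat. intros n _.
  unfold R_dist. rewrite Rminus_diag, Rabs_R0. exact Heps.
Qed.

Section Cardinality.
Context {V : Type}.

Lemma card_is_le (P Q : V -> Prop) a b :
  card_is P a -> card_is Q b -> (forall y, Q y -> P y) -> (b <= a)%nat.
Proof.
  intros [la [Na [<- Ha]]] [lb [Nb [<- Hb]]] HQP.
  apply NoDup_incl_length; auto. intros y Hy. apply Ha, HQP, Hb; auto.
Qed.

Lemma card_is_unique (P : V -> Prop) a b : card_is P a -> card_is P b -> a = b.
Proof. intros Ha Hb. apply Nat.le_antisymm; eapply card_is_le; eauto. Qed.

Lemma card_is_pos (P : V -> Prop) k x : card_is P k -> P x -> (0 < k)%nat.
Proof.
  intros [l [_ [<- Hl]]] Hx. apply Hl in Hx. destruct l; [destruct Hx | simpl; lia].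
Qed.

Lemma card_is_ext (P Q : V -> Prop) k :
  card_is P k -> (forall y, P y <-> Q y) -> card_is Q k.
Proof.
  intros [l [Hnd [Hlen Hl]]] HPQ. exists l. split; [exact Hnd|split; [exact Hlen|]].
  intros y. rewrite Hl. apply HPQ.
Qed.

Lemma card_is_filter (P : V -> Prop) (f : V -> bool) (l : list V) :
  NoDup l -> (forall y, In y l <-> P y) ->
  card_is (fun y => P y /\ f y = true) (length (filter f l)).
Proof.
  intros Hnd Hl. exists (filter f l). split; [apply NoDup_filter, Hnd|split; [reflexivity|]].
  intros y. rewrite filter_In, Hl. reflexivity.
Qed.

Lemma finite_set_sub (P Q : V -> Prop) :
  finite_set P -> (forall y, Q y -> P y) -> finite_set Q.
Proof.
  intros [k [l [Hnd [_ Hl]]]] HQP.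
  set (f := fun y => if excluded_middle_informative (Q y) then true else false).
  exists (length (filter f l)). eapply card_is_ext; [apply card_is_filter; eauto|].
  intros y. unfold f. destruct (excluded_middle_informative (Q y)); firstorder congruence.
Qed.

Definition card_of (P : V -> Prop) : nat :=
  epsilon (inhabits 0%nat) (fun k => card_is P k).

Lemma card_of_spec (P : V -> Prop) : finite_set P -> card_is P (card_of P).
Proof. apply epsilon_spec. Qed.

Lemma card_of_eq (P : V -> Prop) k : card_is P k -> card_of P = k.
Proof. intros Hk. apply card_is_unique with P; [apply card_of_spec; exists k|]; exact Hk. Qed.

Lemma card_of_split_bool (P : V -> Prop) (l : V -> bool) (b : bool) k :
  card_is P k ->
  (card_of (fun y => P y /\ l y = b) + card_of (fun y => P y /\ l y = negb b))%nat = k.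
Proof.
  intros [ls [Hnd [<- Hls]]].
  rewrite <- (filter_length (fun y => Bool.eqb (l y) b) ls).
  f_equal; apply card_of_eq;
    (eapply card_is_ext; [apply card_is_filter; eauto|]);
    intros y; cbv beta; destruct (l y), b; simpl; intuition congruence.
Qed.

End Cardinality.

Section Balls.
Context {V : Type} (adj : V -> V -> Prop).

Lemma walk_app x y z m k : walk adj x y m -> walk adj y z k -> walk adj x z (m + k).
Proof. induction 1; intros; simpl; [assumption | econstructor; eauto]. Qed.

Lemma ball_self x n : ball adj x n x.
Proof. exists 0%nat. split; [lia | constructor]. Qed.

Lemma ball_shift x y d n z : walk adj x y d -> ball adj y n z -> ball adj x (n + d) z.
Proof.
  intros Hxy [m [Hm Hyz]]. exists (d + m)%nat. split; [lia|]. apply walk_app with y; assumption.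
Qed.

End Balls.

Section BallRatios.
Context {V : Type} (adj : V -> V -> Prop).
Hypothesis balls_finite : forall x n, finite_set (ball adj x n).

Definition ball_ratio (x : V) (W : V -> Prop) (n : nat) : R :=
  INR (card_of (fun y => ball adj x n y /\ W y)) / INR (card_of (ball adj x n)).

Lemma ball_card_of (x : V) n : card_is (ball adj x n) (card_of (ball adj x n)).
Proof. apply card_of_spec, balls_finite. Qed.

Lemma ball_inter_card_of (x : V) (W : V -> Prop) n :
  card_is (fun y => ball adj x n y /\ W y) (card_of (fun y => ball adj x n y /\ W y)).
Proof. apply card_of_spec. apply finite_set_sub with (ball adj x n); [apply balls_finite | tauto]. Qed.

Lemma ball_card_pos (x : V) n : 0 < INR (card_of (ball adj x n)).
Proof. apply lt_0_INR. eapply card_is_pos; [apply ball_card_of | apply ball_self]. Qed.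

Lemma ball_ratio_nonneg (x : V) W n : 0 <= ball_ratio x W n.
Proof.
  unfold ball_ratio, Rdiv. apply Rmult_le_pos; [apply pos_INR|].
  left. apply Rinv_0_lt_compat, ball_card_pos.
Qed.

Lemma ratio_atE (x : V) W n r : ratio_at adj x W n r <-> r = ball_ratio x W n.
Proof.
  split.
  - intros [[a [b [Ha [Hb ->]]]] | [_ [Hinf _]]].
    + unfold ball_ratio. rewrite (card_of_eq _ _ Ha), (card_of_eq _ _ Hb). reflexivity.
    + exfalso. apply Hinf, balls_finite.
  - intros ->. left. do 2 eexists.
    split; [apply ball_inter_card_of | split; [apply ball_card_of | reflexivity]].
Qed.

Lemma density_atE (x : V) W d : density_at adj x W d <-> Un_cv (ball_ratio x W) d.
Proof.
  split.
  - intros [u [Hu Hcv]]. replace (ball_ratio x W) with u; [exact Hcv|].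
    apply functional_extensionality. intros n. apply ratio_atE, Hu.
  - intros Hcv. exists (ball_ratio x W). split; [|exact Hcv]. intros n. apply ratio_atE. reflexivity.
Qed.

Lemma density_of_uniform (v : V) W d :
  (forall x, Un_cv (ball_ratio x W) d) -> density adj W d.
Proof.
  intros Hcv. split.
  - intros x. exists d. apply density_atE, Hcv.
  - split.
    + intros r [x Hx]. apply density_atE in Hx. rewrite (UL_sequence _ _ _ Hx (Hcv x)). lra.
    + intros s Hs. apply Hs. exists v. apply density_atE, Hcv.
Qed.

Lemma ball_ratio_bool_compl (x : V) (l : V -> bool) b n :
  ball_ratio x (fun y => l y = negb b) n = 1 - ball_ratio x (fun y => l y = b) n.
Proof.
  unfold ball_ratio.
  pose proof (card_of_split_bool _ l b _ (ball_card_of x n)) as Hsplit.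
  pose proof (ball_card_pos x n) as Hpos.
  rewrite <- Hsplit in *. rewrite plus_INR in *. field. lra.
Qed.

Lemma density_bool_compl (x : V) (l : V -> bool) b :
  Un_cv (ball_ratio x (fun y => l y = b)) 0 ->
  Un_cv (ball_ratio x (fun y => l y = negb b)) 1.
Proof.
  intros Hcv. rewrite <- Rminus_0_r.
  replace (ball_ratio x (fun y => l y = negb b)) with (fun n => 1 - ball_ratio x (fun y => l y = b) n).
  - apply Un_cv_one_minus, Hcv.
  - apply functional_extensionality. intros n. symmetry. apply ball_ratio_bool_compl.
Qed.

End BallRatios.

Section BoundedGrowth.
Context {V : Type} (adj : V -> V -> Prop) (w : V) (c : R).
Hypothesis conn : connected adj.
Hypothesis growth : forall n : nat, exists a b : nat,
  card_is (ball adj w n) a /\ card_is (ball adj w (S n)) b /\ INR b < c * INR a.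

Lemma balls_finite_of_growth x n : finite_set (ball adj x n).
Proof.
  destruct (conn w x) as [d Hwx]. destruct (growth (n + d)) as [a [_ [Ha _]]].
  apply finite_set_sub with (ball adj w (n + d)); [exists a; exact Ha|].
  intros y. apply ball_shift, Hwx.
Qed.

Let balls_finite := balls_finite_of_growth.

Lemma growth_const_pos : 0 < c.
Proof.
  destruct (growth 0) as [a [b [Ha [_ Hab]]]].
  pose proof (card_is_pos _ _ _ Ha (ball_self adj w 0)) as Ha_pos.
  apply lt_INR in Ha_pos. pose proof (pos_INR b). simpl in Ha_pos. nra.
Qed.

Lemma ball_card_growth_pow k j :
  INR (card_of (ball adj w (k + j))) <= c ^ j * INR (card_of (ball adj w k)).
Proof.
  induction j as [|j IHj].
  - rewrite Nat.add_0_r. simpl. lra.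
  - rewrite Nat.add_succ_r. simpl. rewrite Rmult_assoc.
    apply Rle_trans with (c * INR (card_of (ball adj w (k + j)))).
    + destruct (growth (k + j)) as [a [b [Ha [Hb Hab]]]].
      rewrite (card_of_eq _ _ Ha), (card_of_eq _ _ Hb). lra.
    + apply Rmult_le_compat_l; [left; apply growth_const_pos | exact IHj].
Qed.

(* With walks of lengths [D : v -> x], [f : w -> v], [p : x -> w] and [k = n - p]:
   [B_x(n) ∩ W ⊆ B_v(n+D) ∩ W], [B_w(k) ⊆ B_x(n)] and
   [|B_v(n+D)| <= |B_w(k + D+f+p)| <= c^(D+f+p) |B_w(k)|]. *)
Lemma ball_ratio_dominated x v (W : V -> Prop) :
  exists K D p, 0 < K /\
    forall n, (p <= n)%nat -> ball_ratio adj x W n <= K * ball_ratio adj v W (n + D).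
Proof.
  destruct (conn v x) as [D Hvx]. destruct (conn w v) as [f Hwv].
  destruct (conn x w) as [p Hxw].
  exists (c ^ (D + f + p)), D, p. split; [apply pow_lt, growth_const_pos|].
  intros n Hn. set (k := (n - p)%nat).
  unfold ball_ratio. apply Rdiv_le_scaled with (C := INR (card_of (ball adj w k))).
  - apply pos_INR.
  - apply le_INR. eapply card_is_le; [apply ball_inter_card_of, balls_finite
                                      | apply ball_inter_card_of, balls_finite|].
    intros y [Hy HW]. split; [eapply ball_shift; eassumption | exact HW].
  - apply ball_card_pos, balls_finite.
  - apply le_INR. eapply card_is_le; [apply ball_card_of, balls_finite
                                      | apply ball_card_of, balls_finite|].
    intros y Hy. replace n with (k + p)%nat by lia. eapply ball_shift; eassumption.
  - apply ball_card_pos, balls_finite.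
  - apply Rle_trans with (INR (card_of (ball adj w (k + (D + f + p))))).
    + apply le_INR. eapply card_is_le; [apply ball_card_of, balls_finite
                                        | apply ball_card_of, balls_finite|].
      intros y Hy. replace (k + (D + f + p))%nat with (n + D + f)%nat by lia.
      eapply ball_shift; eassumption.
    + apply ball_card_growth_pow.
Qed.

Lemma density_zero_transfer x v (W : V -> Prop) :
  Un_cv (ball_ratio adj v W) 0 -> Un_cv (ball_ratio adj x W) 0.
Proof.
  intros Hv. destruct (ball_ratio_dominated x v W) as [K [D [p [HK Hdom]]]].
  apply Un_cv_0_le_scaled with (fun n => ball_ratio adj v W (n + D)) K p; [exact HK| |exact Hdom|].
  - intros n. apply ball_ratio_nonneg, balls_finite.
  - apply CV_shift', Hv.
Qed.

End BoundedGrowth.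

Theorem lemma2p1 (V : Type) (adj : V -> V -> Prop) (v w : V) :
  simple_graph adj ->
  connected adj ->
  (exists c : R, forall n : nat, exists a b : nat,
      card_is (ball adj w n) a /\ card_is (ball adj w (S n)) b /\
      INR b < c * INR a) ->
  dist_density_zero_at adj v ->
  dist_density_zero adj.
Proof.
  intros _ Hconn [c Hgrowth] [l [Hdist [db [dr [Hb [Hr Hmin]]]]]].
  pose proof (balls_finite_of_growth adj w c Hconn Hgrowth) as Hfin.
  assert (Hsplit : forall b, Un_cv (ball_ratio adj v (fun y => l y = b)) 0 ->
            density adj (fun y => l y = b) 0 /\ density adj (fun y => l y = negb b) 1).
  { intros b Hv.
    assert (Hzero : forall x, Un_cv (ball_ratio adj x (fun y => l y = b)) 0).
    { intros x. apply (density_zero_transfer adj w c Hconn Hgrowth x v), Hv. }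
    split; apply (density_of_uniform adj Hfin v); intros x.
    - apply Hzero.
    - apply (density_bool_compl adj Hfin), Hzero. }
  apply (density_atE adj Hfin) in Hb, Hr.
  exists l. split; [exact Hdist|].
  unfold Rmin in Hmin. destruct (Rle_dec db dr); subst.
  - destruct (Hsplit true Hb) as [Hblue Hred]. exists 0, 1.
    split; [exact Hblue | split; [exact Hred | apply Rmin_left; lra]].
  - destruct (Hsplit false Hr) as [Hred Hblue]. exists 1, 0.
    split; [exact Hblue | split; [exact Hred | apply Rmin_right; lra]].
Qed.
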